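(* Let $(X,d)$ be a compact doubling metric space with $\operatorname{diam}(X,d)=1/2$ and $\mathcal S$ a hyperbolic filling with parameters $a\ge\lambda\ge6$. Let $\rho:\mathcal S\to(0,\infty)$ satisfy (H1) and (H4) (exponent $p$). Let $C>1$, let $\mu_k$ be a $(C,\pi)$-balanced probability mass function on $\mathcal S_k$, and let $f_0:\mathcal S_{k+1}\to(0,1]$ be a probability mass function such that $(\mu_k,f_0)$ is $(C,\pi)$-compatible. Let $e=\{w_1,w_1'\}$ be a horizontal edge between vertices of $\mathcal S_{k+1}$ on which $f_0$ is $(C,\pi)$-unbalanced. Then $(\mu_k,B^e_{k+1}(f_0))$ is $(C,\pi)$-compatible.
   Context: Hyperbolic filling: $X_0\subset X_1\subset\cdots$ increasing, $X_n$ maximal $a^{-n}$-separated in $X$ ($X_0=\{x_0\}$); $\mathcal S_n=\{(x,n):x\in X_n\}$, $\mathcal S=\bigcup_n\mathcal S_n$, $v_0=(x_0,0)$. Each $(x,n)$, $n\ge1$, has a fixed parent $(y,n-1)$ with $d(x,y)=\min_{z\in X_{n-1}}d(x,z)$; $\mathcal D_n(v)$ = descendants of $v$ in $\mathcal S_n$; genealogy $g(v)=(v_0,\dots,v_k=v)$. $D_2$: graph distance for the graph with edges vertex–parent and horizontal edges between distinct $(x,n),(y,n)$ with $B(x,\lambda a^{-n})\cap B(y,\lambda a^{-n})\ne\emptyset$. $\pi(v)=\prod_{w\in g(v)}\rho(w)$. (H1) $0<\eta_-\le\rho\le\eta_+<1$. (H4) $\sum_{w\in\mathcal D_n(v)}\pi(w)^p\le\pi(v)^p$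 for all $v\in\mathcal S_m$, $n>m$. $f:\mathcal S_k\to(0,\infty)$ is $(C,\pi)$-balanced if $f(u)/\pi(u)^p\le C^2f(v)/\pi(v)^p$ for all $u,v\in\mathcal S_k$ with $D_2(u,v)=1$; it is $(C,\pi)$-balanced on an edge $\{u,v\}$ if $C^{-2}f(v)/\pi(v)^p\le f(u)/\pi(u)^p\le C^2f(v)/\pi(v)^p$, and $(C,\pi)$-unbalanced on it otherwise. $(f_0,f_1)$ with $f_0$ on $\mathcal S_k$, $f_1$ on $\mathcal S_{k+1}$ is $(C,\pi)$-compatible if $f_0(u)/\pi(u)^p\le f_1(v)/\pi(v)^p\le Cf_0(u)/\pi(u)^p$ whenever $u$ is the parent of $v$. Balancing operator: for a horizontal edge $e=\{u,v\}$ in $\mathcal S_j$ and $f:\mathcal S_j\to(0,\infty)$, $B^e_j(f)=f$ if $f$ is balanced on $e$; if $f(u)/\pi(u)^p>C^2f(v)/\pi(v)^p$, then $B^e_j(f)$ agrees with $f$ off $\{u,v\}$ and equals $f(u)-\alpha$ at $u$, $f(v)+\alpha$ at $v$, where $\alpha(C^2/\pi(v)^p+1/\pi(u)^p)=f(u)/\pi(u)^p-C^2f(v)/\pi(v)^p$; symmetrically with $u,v$ exchanged if $f(v)/\pi(v)^p>C^2f(u)/\pi(u)^p$. *)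

From HB Require Import structures.
From mathcomp Require Import all_boot all_order all_algebra.
From mathcomp Require Import finmap.
From mathcomp Require Import all_classical all_reals all_analysis.
Set Implicit Arguments. Unset Strict Implicit. Unset Printing Implicit Defensive.
Import Order.TTheory GRing.Theory Num.Theory.
Local Open Scope ring_scope.


Section Defs.
Variables (R : realType) (X : choiceType).

Definition is_metric (d : X -> X -> R) : Prop :=
  [/\ forall x y, 0 <= d x y,
      forall x y, d x y = 0 <-> x = y,
      forall x y, d x y = d y x &
      forall x y z, d x z <= d x y + d y z].

Definition ballm (d : X -> X -> R) (x : X) (r : R) : X -> Prop :=
  fun y => d x y < r.

(** compactness (sequential compactness, equivalent for metric spaces) *)
Definition seq_compact (d : X -> X -> R) : Prop :=
  forall u : nat -> X, exists (phi : nat -> nat) (l : X),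
    (forall n, (phi n < phi n.+1)%N) /\
    (forall e : R, 0 < e -> exists N : nat, forall n, (N <= n)%N -> d (u (phi n)) l < e).

Definition doubling (d : X -> X -> R) : Prop :=
  exists N : nat, forall (x : X) (r : R), 0 < r ->
    exists s : seq X, (size s <= N)%N /\
      forall y, ballm d x (2 * r) y -> exists2 z, z \in s & ballm d z r y.

Definition diam_eq (d : X -> X -> R) (D : R) : Prop :=
  (forall x y, d x y <= D) /\
  (forall e : R, 0 < e -> exists x y, D - e < d x y).

Definition ainv (a : R) (n : nat) : R := (a ^+ n)^-1.

(** Hyperbolic filling data: X_n (finite vertex sets) and the parent map
    par n x = point of the parent of (x,n), n >= 1. *)
Definition hyperbolic_filling (d : X -> X -> R) (a : R) (x0 : X)
    (Xn : nat -> {fset X}) (par : nat -> X -> X) : Prop :=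
  [/\ Xn 0%N = [fset x0]%fset,
      forall n, (Xn n `<=` Xn n.+1)%fset,
      forall n x y, x \in Xn n -> y \in Xn n -> x != y -> ainv a n <= d x y,
      (* maximality: no point of X can be added keeping separation *)
      forall n z, z \notin Xn n -> exists2 x, x \in Xn n & d z x < ainv a n &
      forall n x, x \in Xn n.+1 ->
        par n.+1 x \in Xn n /\ forall z, z \in Xn n -> d x (par n.+1 x) <= d x z].

Definition hedge (d : X -> X -> R) (lam a : R) (n : nat) (x y : X) : Prop :=
  x != y /\ exists z, ballm d x (lam * ainv a n) z /\ ballm d y (lam * ainv a n) z.

(** adjacency in the graph defining D_2 (vertices (x,n),(y,m) in S);
    D_2(u,v) = 1 iff u and v are adjacent *)
Definition adjS (d : X -> X -> R) (lam a : R) (par : nat -> X -> X)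
    (x : X) (n : nat) (y : X) (m : nat) : Prop :=
  (n = m /\ hedge d lam a n x y) \/
  (n = m.+1 /\ par n x = y) \/ (m = n.+1 /\ par m y = x).

Fixpoint up (par : nat -> X -> X) (n k : nat) (x : X) : X :=
  match k with
  | 0%N => x
  | k'.+1 => up par n.-1 k' (par n x)
  end.

Fixpoint piS (rho : X -> nat -> R) (par : nat -> X -> X) (n : nat) (x : X) : R :=
  match n with
  | 0%N => rho x 0%N
  | n'.+1 => rho x n * piS rho par n' (par n x)
  end.

Definition H1 (Xn : nat -> {fset X}) (rho : X -> nat -> R) (etam etap : R) : Prop :=
  [/\ 0 < etam, etam <= etap, etap < 1 &
      forall n x, x \in Xn n -> etam <= rho x n <= etap].

(** (H4): sum over the descendants D_n(v) of v=(y,m) *)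
Definition H4 (Xn : nat -> {fset X}) (rho : X -> nat -> R) (par : nat -> X -> X)
    (p : R) : Prop :=
  forall (m n : nat) (y : X), y \in Xn m -> (m < n)%N ->
    \sum_(x <- enum_fset (Xn n) | up par n (n - m) x == y)
        (piS rho par n x) `^ p
      <= (piS rho par m y) `^ p.

Definition prob_mass (Xn : nat -> {fset X}) (k : nat) (f : X -> R) : Prop :=
  (forall x, x \in Xn k -> 0 < f x) /\ \sum_(x <- enum_fset (Xn k)) f x = 1.

Definition dens (rho : X -> nat -> R) (par : nat -> X -> X) (p : R) (k : nat)
    (f : X -> R) (x : X) : R := f x / (piS rho par k x) `^ p.

Definition balanced (d : X -> X -> R) (lam a : R) (Xn : nat -> {fset X})
    (rho : X -> nat -> R) (par : nat -> X -> X) (p C : R) (k : nat) (f : X -> R) : Prop :=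
  (forall x, x \in Xn k -> 0 < f x) /\
  forall u v, u \in Xn k -> v \in Xn k -> adjS d lam a par u k v k ->
    dens rho par p k f u <= C ^+ 2 * dens rho par p k f v.

Definition balanced_edge (rho : X -> nat -> R) (par : nat -> X -> X) (p C : R) (k : nat)
    (f : X -> R) (u v : X) : Prop :=
  C ^- 2 * dens rho par p k f v <= dens rho par p k f u
  /\ dens rho par p k f u <= C ^+ 2 * dens rho par p k f v.

Definition compatible (Xn : nat -> {fset X}) (rho : X -> nat -> R) (par : nat -> X -> X)
    (p C : R) (k : nat) (f0 f1 : X -> R) : Prop :=
  forall u v, u \in Xn k -> v \in Xn k.+1 -> par k.+1 v = u ->
    dens rho par p k f0 u <= dens rho par p k.+1 f1 v
    /\ dens rho par p k.+1 f1 v <= C * dens rho par p k f0 u.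

Definition balancing (rho : X -> nat -> R) (par : nat -> X -> X) (p C : R) (j : nat)
    (f : X -> R) (u v : X) : X -> R :=
  let pu := (piS rho par j u) `^ p in
  let pv := (piS rho par j v) `^ p in
  if f u / pu > C ^+ 2 * (f v / pv) then
    let alpha := (f u / pu - C ^+ 2 * (f v / pv)) / (C ^+ 2 / pv + 1 / pu) in
    fun x => if x == u then f u - alpha else if x == v then f v + alpha else f x
  else if f v / pv > C ^+ 2 * (f u / pu) then
    let alpha := (f v / pv - C ^+ 2 * (f u / pu)) / (C ^+ 2 / pu + 1 / pv) in
    fun x => if x == v then f v - alpha else if x == u then f u + alpha else f x
  else f.

End Defs.

(* Moving mass along e = {u, v} from the heavier end u to v lowers the density at u
   and raises it at v, and alpha makes the new density at u exactly C^2 times the new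
   one at v.  So only the lower bound at u and the upper bound at v can fail; both
   follow by comparing through the other endpoint, since the parents of u and v are
   equal or horizontally adjacent in S_k (the ball condition for e propagates up one
   level because lambda <= a and 3 <= lambda), so the balance of mu_k relates their
   densities by the factor C^2. *)
From HB Require Import structures.
From mathcomp Require Import all_boot all_order all_algebra.
From mathcomp Require Import finmap.
From mathcomp Require Import all_classical all_reals all_analysis.
From mathcomp Require Import ring lra.
Set Implicit Arguments. Unset Strict Implicit. Unset Printing Implicit Defensive.
Import Order.TTheory GRing.Theory Num.Theory.
Local Open Scope ring_scope.

Lemma balancing_transfer (R : realFieldType) (A B P Q c : R) :
  0 < P -> 0 < Q -> 0 <= c -> c * (B / Q) < A / P ->
  let alpha := (A / P - c * (B / Q)) / (c / Q + 1 / P) in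
  [/\ (A - alpha) / P = c * ((B + alpha) / Q),
      (A - alpha) / P <= A / P & B / Q <= (B + alpha) / Q].
Proof.
move=> P0 Q0 c0 unbal alpha.
have den0 : 0 < c / Q + 1 / P.
  by rewrite ltr_wpDl ?divr_ge0 ?divr_gt0 // ltW.
have alpha0 : 0 < alpha by rewrite divr_gt0 // subr_gt0.
split.
- rewrite /alpha; field.
  have cPQ0 : 0 < c * P + Q by rewrite ltr_wpDl // mulr_ge0 // ltW.
  by rewrite !gt_eqF.
- by rewrite mulrBl lerBlDr lerDl ltW // divr_gt0.
- by rewrite mulrDl lerDl ltW // divr_gt0.
Qed.

Lemma ainv_gt0 (R : realType) (a : R) n : 0 < a -> 0 < ainv a n.
Proof. by move=> a0; rewrite /ainv invr_gt0 exprn_gt0. Qed.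

Lemma mul_ainvS (R : realType) (a : R) n : a != 0 -> a * ainv a n.+1 = ainv a n.
Proof. by move=> a0; rewrite /ainv exprS invfM mulrA divff ?mul1r. Qed.

Section Filling.
Variables (R : realType) (X : choiceType) (d : X -> X -> R) (a lam : R) (x0 : X).
Variables (Xn : nat -> {fset X}) (par : nat -> X -> X).
Hypotheses (d_metric : is_metric d) (filling : hyperbolic_filling d a x0 Xn par).

Lemma parent_mem n x : x \in Xn n.+1 -> par n.+1 x \in Xn n.
Proof. by case: filling => _ _ _ _ parent /parent[]. Qed.

Lemma dist_parent_lt n x : 0 < a -> x \in Xn n.+1 -> d x (par n.+1 x) < ainv a n.
Proof.
have [_ d_eq0 _ _] := d_metric; case: filling => _ _ _ maximal parent a0 xS.
have [_ nearest] := parent n x xS.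
have [xn | /maximal[y yn dxy]] := boolP (x \in Xn n).
  by apply: le_lt_trans (nearest x xn) _; rewrite (d_eq0 x x).2 // ainv_gt0.
exact: le_lt_trans (nearest y yn) dxy.
Qed.

Lemma hedge_sym n u v : hedge d lam a n u v -> hedge d lam a n v u.
Proof. by case=> uv [z [uz vz]]; split; [rewrite eq_sym | exists z]. Qed.

Hypotheses (lam_ge3 : 3 <= lam) (lam_le_a : lam <= a).

Lemma hedge_parent n u v :
  u \in Xn n.+1 -> v \in Xn n.+1 -> hedge d lam a n.+1 u v ->
  par n.+1 u != par n.+1 v -> hedge d lam a n (par n.+1 u) (par n.+1 v).
Proof.
move=> uS vS [_ [z [uz vz]]] neq_par; split => //.
have [_ _ d_sym d_tri] := d_metric.
have a0 : 0 < a by apply: lt_le_trans lam_le_a; apply: lt_le_trans lam_ge3.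
have t0 := ainv_gt0 n a0; have s0 := ainv_gt0 n.+1 a0.
have up_scale : lam * ainv a n.+1 <= ainv a n.
  by rewrite -(mul_ainvS n (lt0r_neq0 a0)) ler_wpM2r // ltW.
have big_ball : 3 * ainv a n <= lam * ainv a n by rewrite ler_wpM2r // ltW.
have du := dist_parent_lt a0 uS; have dv := dist_parent_lt a0 vS.
rewrite /ballm in uz vz *; exists u; split.
  by rewrite d_sym; lra.
have := d_tri (par n.+1 v) v u; have := d_tri v z u.
by rewrite (d_sym (par n.+1 v) v) (d_sym z u); lra.
Qed.

End Filling.

Section Densities.
Variables (R : realType) (X : choiceType) (Xn : nat -> {fset X}).
Variables (par : nat -> X -> X) (rho : X -> nat -> R) (p C : R) (k : nat).

Lemma piS_gt0 n x :
  (forall m y, y \in Xn m.+1 -> par m.+1 y \in Xn m) ->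
  (forall m y, y \in Xn m -> 0 < rho y m) ->
  x \in Xn n -> 0 < piS rho par n x.
Proof.
move=> par_mem rho_gt0; elim: n x => [|n IHn] x xn /=; first exact: rho_gt0.
by rewrite mulr_gt0 ?rho_gt0 ?IHn ?par_mem.
Qed.

Lemma balanced_parents (d : X -> X -> R) (a lam : R) (x0 : X) (mu : X -> R) u v :
  is_metric d -> hyperbolic_filling d a x0 Xn par -> 3 <= lam -> lam <= a ->
  1 <= C -> balanced d lam a Xn rho par p C k mu ->
  u \in Xn k.+1 -> v \in Xn k.+1 -> hedge d lam a k.+1 u v ->
  dens rho par p k mu (par k.+1 u) <= C ^+ 2 * dens rho par p k mu (par k.+1 v).
Proof.
move=> d_metric filling lam_ge3 lam_le_a C_ge1 [mu_gt0 mu_bal] uS vS uv.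
have pu := parent_mem filling uS; have pv := parent_mem filling vS.
have [-> | neq_par] := eqVneq (par k.+1 u) (par k.+1 v).
  rewrite ler_peMl ?exprn_ege1 //.
  by rewrite /dens divr_ge0 ?powR_ge0 // ltW // mu_gt0.
apply: mu_bal => //; left; split => //.
exact: (hedge_parent d_metric filling).
Qed.

Lemma compatible_transfer (mu f g : X -> R) u v :
  0 < C -> u \in Xn k.+1 -> v \in Xn k.+1 ->
  par k.+1 u \in Xn k -> par k.+1 v \in Xn k ->
  dens rho par p k mu (par k.+1 u) <= C ^+ 2 * dens rho par p k mu (par k.+1 v) ->
  (forall x, x != u -> x != v -> g x = f x) ->
  dens rho par p k.+1 g u = C ^+ 2 * dens rho par p k.+1 g v ->
  dens rho par p k.+1 g u <= dens rho par p k.+1 f u ->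
  dens rho par p k.+1 f v <= dens rho par p k.+1 g v ->
  compatible Xn rho par p C k mu f -> compatible Xn rho par p C k mu g.
Proof.
move=> C0 uS vS pu pv mu_uv g_off g_uv g_u g_v f_comp y x yk xS par_x; subst y.
have [fu_lo fu_hi] := f_comp _ u pu uS erefl.
have [fv_lo fv_hi] := f_comp _ v pv vS erefl.
have C2 : 0 < C ^+ 2 by rewrite exprn_gt0.
have [-> | xu] := eqVneq x u.
  split; last exact: le_trans g_u fu_hi.
  rewrite g_uv (le_trans mu_uv) // ler_pM2l //; exact: le_trans fv_lo g_v.
have [-> | xv] := eqVneq x v.
  split; first exact: le_trans fv_lo g_v.
  rewrite -(ler_pM2l C2) -g_uv (le_trans g_u) // (le_trans fu_hi) //.
  by rewrite [X in _ <= X]mulrCA ler_pM2l.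
by rewrite /dens (g_off x xu xv) //; apply: f_comp.
Qed.

Lemma compatible_shift (d : X -> X -> R) (a lam : R) (x0 : X) (mu f : X -> R) u v :
  is_metric d -> hyperbolic_filling d a x0 Xn par -> 3 <= lam -> lam <= a ->
  (forall n x, x \in Xn n -> 0 < rho x n) -> 1 <= C ->
  balanced d lam a Xn rho par p C k mu -> compatible Xn rho par p C k mu f ->
  u \in Xn k.+1 -> v \in Xn k.+1 -> hedge d lam a k.+1 u v ->
  let pu := piS rho par k.+1 u `^ p in let pv := piS rho par k.+1 v `^ p in
  C ^+ 2 * (f v / pv) < f u / pu ->
  let alpha := (f u / pu - C ^+ 2 * (f v / pv)) / (C ^+ 2 / pv + 1 / pu) in
  compatible Xn rho par p C k mu
    (fun x => if x == u then f u - alpha else if x == v then f v + alpha else f x).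
Proof.
move=> d_metric filling lam_ge3 lam_le_a rho_gt0 C_ge1 mu_bal f_comp uS vS uv.
move=> pu pv unbal alpha.
have [neq_uv _] := uv.
have vu : (v == u) = false by rewrite eq_sym (negPf neq_uv).
have C_gt0 : 0 < C by apply: lt_le_trans C_ge1.
have pi_gt0 x : x \in Xn k.+1 -> 0 < piS rho par k.+1 x `^ p.
  by move=> xS; rewrite powR_gt0 // (piS_gt0 (parent_mem filling)).
have [g_uv g_u g_v] := balancing_transfer (pi_gt0 _ uS) (pi_gt0 _ vS)
  (ltW (exprn_gt0 2 C_gt0)) unbal.
have mu_uv := balanced_parents d_metric filling lam_ge3 lam_le_a C_ge1 mu_bal uS vS uv.
apply: (compatible_transfer C_gt0 uS vS (parent_mem filling uS) (parent_mem filling vS)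
  mu_uv _ _ _ _ f_comp).
- by move=> x /negPf-> /negPf->.
- by rewrite /dens !eqxx vu.
- by rewrite /dens eqxx.
- by rewrite /dens vu eqxx.
Qed.

End Densities.

Theorem lemma3p12 (R : realType) (X : choiceType) (d : X -> X -> R)
  (a lam : R) (x0 : X) (Xn : nat -> {fset X}) (par : nat -> X -> X)
  (rho : X -> nat -> R) (etam etap p C : R) (k : nat)
  (mu f0 : X -> R) (w1 w1' : X) :
  is_metric d -> seq_compact d -> doubling d -> diam_eq d (1 / 2) ->
  6 <= lam -> lam <= a ->
  hyperbolic_filling d a x0 Xn par ->
  (forall n x, x \in Xn n -> 0 < rho x n) ->
  H1 Xn rho etam etap -> H4 Xn rho par p ->
  1 < C ->
  prob_mass Xn k mu -> balanced d lam a Xn rho par p C k mu ->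
  prob_mass Xn k.+1 f0 -> (forall x, x \in Xn k.+1 -> f0 x <= 1) ->
  compatible Xn rho par p C k mu f0 ->
  w1 \in Xn k.+1 -> w1' \in Xn k.+1 -> hedge d lam a k.+1 w1 w1' ->
  ~ balanced_edge rho par p C k.+1 f0 w1 w1' ->
  compatible Xn rho par p C k mu (balancing rho par p C k.+1 f0 w1 w1').
Proof.
move=> d_metric _ _ _ lam_ge6 lam_le_a filling rho_gt0 _ _ C_gt1 _ mu_bal _ _ f0_comp.
move=> w1S w1'S e _.
have lam_ge3 : 3 <= lam by lra.
have C_ge1 := ltW C_gt1.
rewrite /balancing; case: ifP => [unbal | _].
  exact: compatible_shift d_metric filling lam_ge3 lam_le_a rho_gt0 C_ge1 mu_bal
    f0_comp w1S w1'S e unbal.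
case: ifP => [unbal | _ //].
exact: compatible_shift d_metric filling lam_ge3 lam_le_a rho_gt0 C_ge1 mu_bal
  f0_comp w1'S w1S (hedge_sym e) unbal.
Qed.
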